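(* Let $q$ be a positive integer and $\varepsilon\in(0,1]$ such that $q^\varepsilon$ is an integer. Then there is a function $g:\mathbb N\to\mathbb R$ with $g(n)=o(n)$ such that for every positive integer $n$, the tensor $\langle q,q^\varepsilon,q\rangle^{\otimes n}$ has a zeroing out which is an independent tensor with at least $q^{(1+\varepsilon)n-g(n)}$ nonzero coefficients.
   Context: A tensor over finite sets of formal variables $X,Y,Z$ is a trilinear form $\sum T_{xyz}\,xyz$ with field coefficients. $\langle n,m,k\rangle=\sum_{i=1}^n\sum_{j=1}^m\sum_{l=1}^k x_{ij}y_{jl}z_{li}$. $A^{\otimes n}$ denotes the $n$-fold tensor power: the tensor over $X^n,Y^n,Z^n$ whose coefficient on $(x^{(1)},\dots,x^{(n)})(y^{(1)},\dots,y^{(n)})(z^{(1)},\dots,z^{(n)})$ is $\prod_t A_{x^{(t)}y^{(t)}z^{(t)}}$. For tensors $A,B$ over $X,Y,Z$, $A$ is a zeroing out of $B$ if each $A_{xyz}\in\{B_{xyz},0\}$ and there are functions $a:X\to\mathbb Z_{\ge0}$, $b:Y\to\mathbb Z_{\ge0}$, $c:Z\to\mathbb Z_{\ge0}$ such that whenever $B_{xyz}\ne0$, $A_{xyz}\ne 0$ iff $a(x)+b(y)+c(z)=0$. A tensor is independent if any two distinct triples $(x,y,z),(x',y',z')$ with nonzero coefficients satisfy $x\ne x'$, $y\ne y'$ and $z\ne z'$. *)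

From HB Require Import structures.
From mathcomp Require Import all_boot all_order all_algebra.
From mathcomp Require Import all_classical all_reals all_analysis.
Set Implicit Arguments. Unset Strict Implicit. Unset Printing Implicit Defensive.
Import Order.TTheory GRing.Theory Num.Theory.
Local Open Scope ring_scope.

(* A tensor over finite sets of variables X, Y, Z with coefficients in F:
   T x y z is the coefficient of the monomial x y z. *)
Definition tensor (F : fieldType) (X Y Z : finType) := X -> Y -> Z -> F.

(* <n,m,k> = sum_{i<n, j<m, l<k} x_{ij} y_{jl} z_{li}, with
   X = [n] x [m], Y = [m] x [k], Z = [k] x [n]. *)
Definition mmt (F : fieldType) (n m k : nat) :
  tensor F ('I_n * 'I_m)%type ('I_m * 'I_k)%type ('I_k * 'I_n)%type :=
  fun x y z => ((x.2 == y.1) && (y.2 == z.1) && (z.2 == x.1))%:R.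

Arguments mmt F n m k : clear implicits.

Definition tpow (F : fieldType) (X Y Z : finType) (A : tensor F X Y Z) (n : nat) :
  tensor F {ffun 'I_n -> X} {ffun 'I_n -> Y} {ffun 'I_n -> Z} :=
  fun x y z => \prod_(t < n) A (x t) (y t) (z t).

Definition zeroing_out (F : fieldType) (X Y Z : finType) (A B : tensor F X Y Z) : Prop :=
  (forall x y z, A x y z = B x y z \/ A x y z = 0) /\
  exists (a : X -> nat) (b : Y -> nat) (c : Z -> nat),
    forall x y z, B x y z != 0 -> (A x y z != 0 <-> (a x + b y + c z = 0)%N).

Definition independent (F : fieldType) (X Y Z : finType) (A : tensor F X Y Z) : Prop :=
  forall x y z x' y' z', A x y z != 0 -> A x' y' z' != 0 ->
    (x, y, z) <> (x', y', z') -> [/\ x <> x', y <> y' & z <> z'].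

Definition nnz (F : fieldType) (X Y Z : finType) (A : tensor F X Y Z) : nat :=
  #|[set t : (X * Y * Z)%type | A t.1.1 t.1.2 t.2 != 0]|.
Arguments tpow F X Y Z A n : clear implicits.

From HB Require Import structures.
From mathcomp Require Import all_boot all_order all_algebra.
From mathcomp Require Import all_classical all_reals all_analysis.
From mathcomp Require Import zify ring lra.
From Stdlib Require PeanoNat.
Import Order.TTheory GRing.Theory Num.Theory.
Set Implicit Arguments. Unset Strict Implicit. Unset Printing Implicit Defensive.

(* The tensor power <q, p, q>^n is <Q, P, Q> with Q = q^n and P = p^n: its support is the set
   of triangles (i, j, k) of the complete tripartite graph on [Q], [P], [Q], zeroing out
   variables deletes edges, and the result is independent as soon as no edge lies in two
   triangles. Writing outer vertices as i P + s, keep the triangles (i P + s, s + d, i P + s + 2 d)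
   with d in a set D without 3-term progressions; then every edge determines its triangle.
   Behrend's set of numbers with L digits below p^k in base p^(k+1) lying on a common sphere,
   with k = floor (sqrt n), has size p^(n - O(sqrt n)); with s ranging over p^(n - O(sqrt n))
   values this gives (Q / P) p^(n - O(sqrt n)) |D| = q^((1 + eps) n - O(sqrt n)) triangles. *)

Lemma base_expansion_lt (B L : nat) (F : 'I_L -> nat) :
  (forall i, F i < B) -> \sum_(i < L) F i * B ^ i < B ^ L.
Proof.
elim: L F => [|L IH] F ltFB; first by rewrite big_ord0.
rewrite big_ord_recr expnS /=.
have := IH _ (fun i => ltFB (widen_ord (leqnSn L) i)); have := ltFB ord_max.
set S := \sum_(i < L) _; nia.
Qed.

Lemma base_expansion_inj (B L : nat) (F G : 'I_L -> nat) :
  (forall i, F i < B) -> (forall i, G i < B) ->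
  \sum_(i < L) F i * B ^ i = \sum_(i < L) G i * B ^ i -> F =1 G.
Proof.
elim: L F G => [|L IH] F G ltFB ltGB; first by move=> _ [].
rewrite !big_ord_recr /=.
set F' := fun i => F (widen_ord (leqnSn L) i).
set G' := fun i => G (widen_ord (leqnSn L) i).
have ltF' := base_expansion_lt (fun i => ltFB (widen_ord (leqnSn L) i)).
have ltG' := base_expansion_lt (fun i => ltGB (widen_ord (leqnSn L) i)).
move=> eqFG.
have eq_low : \sum_(i < L) F' i * B ^ i = \sum_(i < L) G' i * B ^ i.
  move: (congr1 (modn^~ (B ^ L)) eqFG) => /=.
  by rewrite ![_ + _ * _]addnC !modnMDl !modn_small.
have eq_top : F ord_max = G ord_max.
  have BL0 : 0 < B ^ L by rewrite expn_gt0 (leq_ltn_trans _ (ltFB ord_max)).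
  by move: eqFG; rewrite eq_low => /addnI/eqP; rewrite eqn_pmul2r // => /eqP.
move=> i; case: (unliftP ord_max i) => [j ->|->] //.
have -> : lift ord_max j = widen_ord (leqnSn L) j.
  by apply: val_inj; rewrite /= /bump leqNgt ltn_ord.
exact: IH F' G' (fun j => ltFB _) (fun j => ltGB _) eq_low j.
Qed.

Definition ap3_free (D : pred nat) : Prop :=
  forall d1 d2 d3, D d1 -> D d2 -> D d3 -> d1 + d2 = 2 * d3 -> d1 = d2.

Section Behrend.

Variables (h L B : nat).
Implicit Types (u v w : {ffun 'I_L -> 'I_h}).

Definition digit_value v : nat := \sum_(i < L) v i * B ^ i.

Definition digit_sqnorm v : nat := \sum_(i < L) v i ^ 2.

Definition behrend_set (r : nat) : pred nat :=
  [pred d | [exists v, (digit_sqnorm v == r) && (digit_value v == d)]].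

Lemma sqnorm_pigeonhole :
  exists r, h ^ L <= #|[set v | digit_sqnorm v == r]| * (L * h ^ 2).+1.
Proof.
set N := (L * h ^ 2).+1.
have sqnorm_lt v : digit_sqnorm v < N.
  rewrite ltnS -[L in L * _]card_ord -sum_nat_const.
  by apply: leq_sum => i _; rewrite leq_exp2r // ltnW.
have -> : h ^ L = \sum_(r < N) #|[set v | digit_sqnorm v == r]|.
  have -> : h ^ L = #|{ffun 'I_L -> 'I_h}| by rewrite card_ffun !card_ord.
  rewrite -sum1_card (partition_big (fun v => Ordinal (sqnorm_lt v)) xpredT) //=.
  by apply: eq_bigr => r _; rewrite -sum1_card; apply: eq_bigl => v; rewrite !inE -val_eqE.
have [r0 _ max_r0] := @arg_maxnP _ (@ord0 (L * h ^ 2)) xpredT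
  (fun r => #|[set v | digit_sqnorm v == r]|) isT.
exists (nat_of_ord r0); rewrite mulnC -[X in X * _]card_ord -sum_nat_const.
by apply: leq_sum => r _; apply: max_r0.
Qed.

(* Sums of two digits stay below B, so adding two digit vectors creates no carry. *)
Hypothesis small_digits : 2 * h <= B.+1.

Lemma digit_lt_base v i : v i < B.
Proof. by have := ltn_ord (v i); lia. Qed.

Lemma digit_value_lt v : digit_value v < B ^ L.
Proof. exact: base_expansion_lt (digit_lt_base v). Qed.

Lemma digit_value_inj : injective digit_value.
Proof.
move=> u v /(base_expansion_inj (digit_lt_base u) (digit_lt_base v)) eq_uv.
by apply/ffunP => i; apply/val_inj/eq_uv.
Qed.

Lemma behrend_set_ap3_free r : ap3_free (behrend_set r).
Proof.
move=> d1 d2 d3 /existsP[u /andP[/eqP su /eqP <-]] /existsP[w /andP[/eqP sw /eqP <-]].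
move=> /existsP[v /andP[/eqP sv /eqP <-]] sum_uw.
have digits_uw i : u i + w i = 2 * v i.
  apply: (@base_expansion_inj B L (fun i => u i + w i) (fun i => 2 * v i)) => {i}.
  - by move=> i; have := ltn_ord (u i); have := ltn_ord (w i); lia.
  - by move=> i; have := ltn_ord (v i); lia.
  - under eq_bigr do rewrite mulnDl.
    rewrite big_split /= [LHS]sum_uw big_distrr /=.
    by apply: eq_bigr => i _; rewrite mulnA.
have sq_uw i : u i ^ 2 + w i ^ 2 + 2 * (u i * w i) = 4 * v i ^ 2.
  by rewrite -sqrnD digits_uw expnMn.
have sum_sq : \sum_(i < L) (u i ^ 2 + w i ^ 2) = 2 * r.
  by rewrite big_split /= -/(digit_sqnorm u) -/(digit_sqnorm w) su sw addnn mul2n.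
have sum_cross : \sum_(i < L) 2 * (u i * w i) = 2 * r.
  have : \sum_(i < L) (u i ^ 2 + w i ^ 2 + 2 * (u i * w i)) = 4 * r.
    by rewrite -sv big_distrr; apply: eq_bigr => i _; apply: sq_uw.
  rewrite big_split /= sum_sq; lia.
(* Equality case of the digitwise inequality 2 u_i w_i <= u_i^2 + w_i^2. *)
have /leqif_sum := fun i (_ : true) => nat_Cauchy (u i) (w i).
move=> [_]; rewrite sum_cross sum_sq eqxx => /esym/forallP eq_uw.
suff -> : u = w by [].
by apply/ffunP => i; apply/val_inj/eqP/eq_uw.
Qed.

Lemma card_behrend_set r :
  #|[set v | digit_sqnorm v == r]| <= #|[set d : 'I_(B ^ L) | behrend_set r d]|.
Proof.
pose enc v := Ordinal (digit_value_lt v).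
have enc_inj : injective enc by move=> u v [/digit_value_inj].
rewrite -(card_imset _ enc_inj); apply/subset_leq_card/fintype.subsetP => d /imsetP[v].
by rewrite !inE => sv ->; apply/existsP; exists v; rewrite sv /=.
Qed.

End Behrend.

Definition triangle (I J K : Type) (eIJ : I -> J -> bool) (eJK : J -> K -> bool)
  (eKI : K -> I -> bool) (i : I) (j : J) (k : K) : bool :=
  [&& eIJ i j, eJK j k & eKI k i].

Definition edge_unique (I J K : Type) (T : I -> J -> K -> bool) : Prop :=
  forall i j k i' j' k', T i j k -> T i' j' k' ->
    [/\ i = i' -> j = j' -> k = k', j = j' -> k = k' -> i = i' & k = k' -> i = i' -> j = j'].

Lemma edge_unique_comp (I J K I' J' K' : Type) (T : I -> J -> K -> bool)
    (f : I' -> I) (g : J' -> J) (h : K' -> K) :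
  injective f -> injective g -> injective h -> edge_unique T ->
  edge_unique (fun i j k => T (f i) (g j) (h k)).
Proof.
move=> f_inj g_inj h_inj uT i j k i' j' k' Tijk Tijk'.
have [Uk Ui Uj] := uT _ _ _ _ _ _ Tijk Tijk'.
split=> [ei ej|ej ek|ek ei]; [apply/h_inj/Uk|apply/f_inj/Ui|apply/g_inj/Uj];
  by rewrite ?ei ?ej ?ek.
Qed.

Lemma divn_modn_mulDl (P i s : nat) : s < P -> (i * P + s) %/ P = i /\ (i * P + s) %% P = s.
Proof.
move=> ltsP; have P_gt0 : 0 < P by apply: leq_ltn_trans ltsP.
by rewrite divnMDl // divn_small // addn0 modnMDl modn_small.
Qed.

Section RuzsaSzemerediGraph.

Variables (P : nat) (D : pred nat).

(* With a and c read as pairs (a %/ P, a %% P), the triangles are the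
   (i P + s, s + d, i P + s + 2 d) with d in D, provided D is 3-AP-free
   (rs_triangle_progression). *)
Definition rs_edgeXY (a b : nat) : bool := (a %% P <= b) && D (b - a %% P).

Definition rs_edgeYZ (b c : nat) : bool := (b <= c %% P) && D (c %% P - b).

Definition rs_edgeZX (c a : nat) : bool :=
  [&& c %/ P == a %/ P, a %% P <= c %% P, ~~ odd (c %% P - a %% P) & D (c %% P - a %% P)./2].

Local Notation rs_triangle := (triangle rs_edgeXY rs_edgeYZ rs_edgeZX).

Lemma rs_triangle_progression a b c : ap3_free D -> rs_triangle a b c ->
  [/\ a %% P <= b <= c %% P, b - a %% P = c %% P - b & c %/ P = a %/ P].
Proof.
move=> D_ap3 /and3P[/andP[ab Dab] /andP[bc Dbc] /and4P[/eqP qca ac even_ca Dca]].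
have half_ca : c %% P - a %% P = 2 * (c %% P - a %% P)./2.
  by rewrite -[LHS]odd_double_half (negbTE even_ca) mul2n.
have := D_ap3 _ _ _ Dab Dbc Dca; rewrite ab bc; split=> //; lia.
Qed.

Lemma rs_triangle_edge_unique : ap3_free D -> edge_unique rs_triangle.
Proof.
move=> D_ap3 a b c a' b' c' /(rs_triangle_progression D_ap3)[/andP[ab bc] dab qca].
move=> /(rs_triangle_progression D_ap3)[/andP[ab' bc'] dab' qca'].
have ea := divn_eq a P; have ec := divn_eq c P.
have ea' := divn_eq a' P; have ec' := divn_eq c' P.
split=> e1 e2; subst.
- by rewrite ec ec' qca qca'; lia.
- by rewrite ea ea' -qca -qca'; lia.
- lia.
Qed.

Variables (m M Q : nat).
Hypotheses (mPQ : m * P <= Q) (MP : 3 * M <= P + 2).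

Lemma rs_triangle_card :
  m * M * #|[set d : 'I_M | D d]| <=
  #|[set t : 'I_Q * 'I_P * 'I_Q | rs_triangle t.1.1 t.1.2 t.2]|.
Proof.
have lt_a (s : 'I_M) : s < P by have := ltn_ord s; lia.
have lt_b (s d : 'I_M) : s + d < P by have := ltn_ord s; have := ltn_ord d; lia.
have lt_c (s d : 'I_M) : s + 2 * d < P by have := ltn_ord s; have := ltn_ord d; lia.
have ltQ (i : 'I_m) x : x < P -> i * P + x < Q by have := ltn_ord i; nia.
pose f (u : 'I_m * 'I_M * 'I_M) : 'I_Q * 'I_P * 'I_Q :=
  let: (i, s, d) := u in
  (Ordinal (ltQ i s (lt_a s)), Ordinal (lt_b s d), Ordinal (ltQ i _ (lt_c s d))).
have f_inj : injective f.
  move=> [[i s] d] [[i' s'] d'] [] e_a e_b _.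
  have [q_a r_a] := divn_modn_mulDl i (lt_a s).
  have [q_a' r_a'] := divn_modn_mulDl i' (lt_a s').
  have e_i : i = i' by apply: val_inj; rewrite /= -q_a -q_a' e_a.
  have e_s : s = s' by apply: val_inj; rewrite /= -r_a -r_a' e_a.
  by move: e_b; rewrite e_i e_s => /addnI/val_inj ->.
set DM := [set d : 'I_M | D d].
have card_dom : #|finset.setX [set: 'I_m * 'I_M] DM| = m * M * #|DM|.
  by rewrite cardsX cardsT card_prod !card_ord.
rewrite -card_dom -(card_imset _ f_inj).
apply/subset_leq_card/fintype.subsetP => t /imsetP[[[i s] d] /finset.setXP[_]].
rewrite /DM inE => Dd ->; rewrite inE /triangle /rs_edgeXY /rs_edgeYZ /rs_edgeZX /=.
have [q_a r_a] := divn_modn_mulDl i (lt_a s).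
have [q_c r_c] := divn_modn_mulDl i (lt_c s d).
rewrite q_a r_a q_c r_c addKn (_ : s + 2 * d - (s + d) = d) ?addKn; last by lia.
by rewrite mul2n doubleK odd_double Dd eqxx leq_add2l -addnn !leq_addr.
Qed.

End RuzsaSzemerediGraph.

Section FfunPairs.

Variables (n : nat) (A B : finType).

Definition ffun_pair (u : {ffun 'I_n -> A}) (v : {ffun 'I_n -> B}) : {ffun 'I_n -> A * B} :=
  [ffun t => (u t, v t)].

Definition ffun_fst (x : {ffun 'I_n -> A * B}) : {ffun 'I_n -> A} := [ffun t => (x t).1].

Definition ffun_snd (x : {ffun 'I_n -> A * B}) : {ffun 'I_n -> B} := [ffun t => (x t).2].

Lemma ffun_fst_pair u v : ffun_fst (ffun_pair u v) = u.
Proof. by apply/ffunP => t; rewrite !ffunE. Qed.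

Lemma ffun_snd_pair u v : ffun_snd (ffun_pair u v) = v.
Proof. by apply/ffunP => t; rewrite !ffunE. Qed.

Lemma ffun_pair_fst_snd x : ffun_pair (ffun_fst x) (ffun_snd x) = x.
Proof. by apply/ffunP => t; rewrite !ffunE; case: (x t). Qed.

Lemma ffun_pair_inj u v u' v' : ffun_pair u v = ffun_pair u' v' -> u = u' /\ v = v'.
Proof.
move=> e; move: (congr1 ffun_fst e) (congr1 ffun_snd e).
by rewrite !ffun_fst_pair !ffun_snd_pair.
Qed.

End FfunPairs.

Lemma boolr_neq0 (R : nzRingType) (b : bool) : (b%:R != 0 :> R)%R = b.
Proof. by case: b; rewrite ?oner_neq0 ?eqxx. Qed.

Section TriangleTensor.

Variables (F : fieldType) (n q p : nat).
Local Notation I := {ffun 'I_n -> 'I_q}.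
Local Notation J := {ffun 'I_n -> 'I_p}.
Local Notation mm_power := (tpow F _ _ _ (mmt F q p q) n).

Lemma mm_power_neq0 x y z :
  mm_power x y z != 0%R <->
  [/\ ffun_snd x = ffun_fst y, ffun_snd y = ffun_fst z & ffun_snd z = ffun_fst x].
Proof.
rewrite /tpow /mmt; split.
  move/prodf_neq0 => nz.
  have edges t : ((x t).2 == (y t).1) && ((y t).2 == (z t).1) && ((z t).2 == (x t).1).
    by have := nz t isT; rewrite boolr_neq0.
  by split; apply/ffunP => t; rewrite !ffunE; have /andP[/andP[/eqP ? /eqP ?] /eqP ?] := edges t.
case=> /ffunP e_xy /ffunP e_yz /ffunP e_zx; apply/prodf_neq0 => t _.
by move: (e_xy t) (e_yz t) (e_zx t); rewrite !ffunE => -> -> ->; rewrite !eqxx oner_neq0.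
Qed.

Variables (eXY : I -> J -> bool) (eYZ : J -> I -> bool) (eZX : I -> I -> bool).

Definition triangle_tensor :
  tensor F {ffun 'I_n -> 'I_q * 'I_p} {ffun 'I_n -> 'I_p * 'I_q} {ffun 'I_n -> 'I_q * 'I_q} :=
  fun x y z =>
    if [&& eXY (ffun_fst x) (ffun_snd x), eYZ (ffun_fst y) (ffun_snd y)
         & eZX (ffun_fst z) (ffun_snd z)]
    then mm_power x y z else 0%R.

Lemma triangle_tensor_zeroing_out : zeroing_out triangle_tensor mm_power.
Proof.
split=> [x y z|]; first by rewrite /triangle_tensor; case: ifP => _; [left|right].
exists (fun x => ~~ eXY (ffun_fst x) (ffun_snd x) : nat).
exists (fun y => ~~ eYZ (ffun_fst y) (ffun_snd y) : nat).
exists (fun z => ~~ eZX (ffun_fst z) (ffun_snd z) : nat).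
move=> x y z nz; rewrite /triangle_tensor.
by case: (eXY _ _); case: (eYZ _ _); case: (eZX _ _); rewrite ?eqxx.
Qed.

Lemma triangle_tensor_support x y z :
  triangle_tensor x y z != 0%R ->
  exists i j k, [/\ x = ffun_pair i j, y = ffun_pair j k, z = ffun_pair k i
                  & triangle eXY eYZ eZX i j k].
Proof.
rewrite /triangle_tensor; case: ifP => [edges|_]; last by rewrite eqxx.
move=> /mm_power_neq0[e_xy e_yz e_zx].
exists (ffun_fst x), (ffun_snd x), (ffun_snd y); split.
- by rewrite ffun_pair_fst_snd.
- by rewrite e_xy ffun_pair_fst_snd.
- by rewrite e_yz -e_zx ffun_pair_fst_snd.
- by move: edges; rewrite -e_xy -e_yz e_zx.
Qed.

Lemma triangle_tensor_independent :
  edge_unique (triangle eXY eYZ eZX) -> independent triangle_tensor.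
Proof.
move=> uniq_edges x y z x' y' z' /triangle_tensor_support[i [j [k [-> -> -> T]]]].
move=> /triangle_tensor_support[i' [j' [k' [-> -> -> T']]]] neq.
have [Uk Ui Uj] := uniq_edges _ _ _ _ _ _ T T'.
split=> /ffun_pair_inj[e1 e2]; apply: neq.
- by rewrite e1 e2 (Uk e1 e2).
- by rewrite e1 e2 (Ui e1 e2).
- by rewrite e1 e2 (Uj e1 e2).
Qed.

Lemma card_triangles_le_nnz :
  #|[set t : I * J * I | triangle eXY eYZ eZX t.1.1 t.1.2 t.2]| <= nnz triangle_tensor.
Proof.
pose f (t : I * J * I) := let: (i, j, k) := t in (ffun_pair i j, ffun_pair j k, ffun_pair k i).
have f_inj : injective f.
  by move=> [[i j] k] [[i' j'] k'] [/ffun_pair_inj[-> ->] /ffun_pair_inj[_ ->] _].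
rewrite -(card_imset _ f_inj); apply/subset_leq_card/fintype.subsetP => x /imsetP[[[i j] k]].
rewrite !inE /= => T ->.
rewrite /triangle_tensor !ffun_fst_pair !ffun_snd_pair -/(triangle eXY eYZ eZX i j k) T.
by apply/mm_power_neq0; rewrite !ffun_fst_pair !ffun_snd_pair.
Qed.

End TriangleTensor.

Lemma card_enum_rank_preimset (I J K : finType) (T : nat -> nat -> nat -> bool) :
  #|[set t : 'I_#|I| * 'I_#|J| * 'I_#|K| | T t.1.1 t.1.2 t.2]| <=
  #|[set t : I * J * K | T (enum_rank t.1.1) (enum_rank t.1.2) (enum_rank t.2)]|.
Proof.
pose f (t : 'I_#|I| * 'I_#|J| * 'I_#|K|) := (enum_val t.1.1, enum_val t.1.2, enum_val t.2).
have f_inj : injective f.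
  by move=> [[a b] c] [[a' b'] c'] [/enum_val_inj-> /enum_val_inj-> /enum_val_inj->].
rewrite -(card_imset _ f_inj); apply/subset_leq_card/fintype.subsetP => x /imsetP[t].
by rewrite !inE => Tt ->; rewrite /= !enum_valK.
Qed.

Lemma leq_expn2r (a b e : nat) : a <= b -> a ^ e <= b ^ e.
Proof. by case: e => [//|e] le_ab; rewrite leq_exp2r. Qed.

(* Behrend's parameters for exponent n: k = sqrt n and L digits below p^k in base p^(k+1), so
   that (p^(k+1))^L <= p^(n-2). *)
Definition behrend_length (n : nat) : nat := (n - 2) %/ (Nat.sqrt n).+1.

Definition behrend_loss (n : nat) : nat := 2 * behrend_length n + 4 * Nat.sqrt n + 5.

Lemma behrend_length_mul_le n : behrend_length n * (Nat.sqrt n).+1 <= n - 2.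
Proof. exact: leq_divM. Qed.

Lemma behrend_loss_sublinear K :
  exists N, forall n, N <= n -> behrend_loss n * K <= 11 * n.
Proof.
exists (K * K) => n le_KKn.
have le_K : K <= Nat.sqrt n.
  by have := PeanoNat.Nat.sqrt_le_mono (K * K) n; rewrite PeanoNat.Nat.sqrt_square; lia.
have [sqrt_le _] := PeanoNat.Nat.sqrt_spec' n.
have := behrend_length_mul_le n.
rewrite /behrend_loss; set k := Nat.sqrt n; set L := behrend_length n => le_L.
have le_k : k <= k * k by case: k {le_K sqrt_le le_L} => //= k; rewrite leq_pmulr.
apply: (@leq_trans (behrend_loss n * k)); first exact: leq_mul.
rewrite /behrend_loss -/k -/L; nia.
Qed.

Lemma digits_small_pow (p k : nat) : 0 < p -> 2 * p ^ k <= (p ^ k.+1).+1.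
Proof.
move=> p_gt0; rewrite expnS; case: (ltngtP p 1) => [|p_gt1|->]; first lia; last by rewrite exp1n.
by apply: leqW; rewrite leq_mul2r p_gt1 orbT.
Qed.

Lemma behrend_range_small (p n : nat) :
  0 < p -> 3 * (p ^ (Nat.sqrt n).+1) ^ behrend_length n <= p ^ n + 2.
Proof.
move=> p_gt0; have le_L := behrend_length_mul_le n.
case: (ltnP n 2) => [lt_n2|le_2n].
  have -> : behrend_length n = 0 by move: le_L; rewrite (_ : n - 2 = 0); lia.
  by have := expn_gt0 p n; rewrite p_gt0 /=; lia.
have le_M : (p ^ (Nat.sqrt n).+1) ^ behrend_length n <= p ^ (n - 2).
  by rewrite -expnM leq_pexp2l // mulnC.
have -> : p ^ n = p ^ (n - 2) * p ^ 2 by rewrite -expnD subnK.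
case: (ltngtP p 1) => [|p_gt1|->]; first lia; last by move: le_M; rewrite !exp1n; lia.
have : 4 <= p ^ 2 by rewrite (leq_exp2r 2 p (isT : 0 < 2)).
nia.
Qed.

Section BehrendEstimate.

Variables (q p n : nat).
Hypotheses (p_gt0 : 0 < p) (p_le_q : p <= q).
Local Notation k := (Nat.sqrt n).
Local Notation L := (behrend_length n).
Local Notation M := ((p ^ k.+1) ^ L).

Lemma behrend_count_estimate (S C : nat) :
  (p ^ k) ^ L <= S * (L * (p ^ k) ^ 2).+1 -> q ^ n %/ p ^ n * M * S <= C ->
  (q * p) ^ n <= C * q ^ behrend_loss n.
Proof.
move=> sphere_large count.
set P := p ^ n; set Q := q ^ n; set m := Q %/ P; set h := p ^ k in sphere_large *.
have P_gt0 : 0 < P by rewrite expn_gt0 p_gt0.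
have h_gt0 : 0 < h by rewrite expn_gt0 p_gt0.
have le_PQ : P <= Q by apply: leq_expn2r.
have le_Q : Q <= 2 * m * P.
  have m_gt0 : 0 < m by rewrite divn_gt0.
  by have := ltn_ceil Q P_gt0; rewrite -/m; nia.
have le_P : P <= M * p ^ k.+2.
  rewrite -expnM -expnD leq_pexp2l //.
  by have := ltn_ceil (n - 2) (ltn0Sn k); rewrite -/(behrend_length n); nia.
have le_M : M <= S * 2 ^ L * p ^ (L + 2 * k).
  have -> : M = p ^ L * h ^ L by rewrite expnS expnMn.
  have le_sphere : (L * h ^ 2).+1 <= 2 ^ L * h ^ 2.
    have := ltn_expl L (isT : 1 < 2); have : 0 < h ^ 2 by rewrite expn_gt0 h_gt0.
    nia.
  rewrite expnD (mulnC 2 k) expnM -/h.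
  apply: (leq_trans (leq_mul (leqnn _) (leq_trans sphere_large (leq_mul (leqnn S) le_sphere)))).
  by apply: eq_leq; ring.
have core : (q * p) ^ n <= C * (2 ^ L.+1 * p ^ (L + 4 * k + 4)).
  rewrite expnMn -/P -/Q.
  apply: (@leq_trans (m * M * S * (2 ^ L.+1 * p ^ (L + 4 * k + 4)))); last exact: leq_mul.
  have -> : p ^ (L + 4 * k + 4) = p ^ (L + 2 * k) * (p ^ k.+2 * p ^ k.+2).
    by rewrite -!expnD; congr (_ ^ _); lia.
  apply: (leq_trans (leq_mul le_Q (leqnn P))).
  apply: (leq_trans (leq_mul (leq_mul (leqnn _) le_P) le_P)).
  have -> : 2 * m * (M * p ^ k.+2) * (M * p ^ k.+2) = 2 * m * M * p ^ k.+2 * p ^ k.+2 * M.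
    by ring.
  by apply: (leq_trans (leq_mul (leqnn _) le_M)); rewrite (expnS 2 L); apply: eq_leq; ring.
case: (leqP q 1) => [le_q1|lt_1q].
  (* Here p = 1 and [core] only says that C > 0. *)
  move: core; have [-> ->] : q = 1 /\ p = 1 by lia.
  by rewrite mul1n !exp1n !muln1; case: C {count}.
apply: leq_trans core _; rewrite leq_mul2l /behrend_loss.
have -> : 2 * L + 4 * k + 5 = L.+1 + (L + 4 * k + 4) by lia.
by rewrite [q ^ _]expnD; apply/orP; right; apply: leq_mul; apply: leq_expn2r; lia.
Qed.

End BehrendEstimate.

Lemma mm_power_independent_zeroing_out (F : fieldType) (q p n : nat) :
  0 < p -> p <= q ->
  exists A : tensor F {ffun 'I_n -> 'I_q * 'I_p} {ffun 'I_n -> 'I_p * 'I_q}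
                      {ffun 'I_n -> 'I_q * 'I_q},
    [/\ zeroing_out A (tpow F _ _ _ (mmt F q p q) n), independent A &
        (q * p) ^ n <= nnz A * q ^ behrend_loss n].
Proof.
move=> p_gt0 p_le_q.
set L := behrend_length n; set h := p ^ Nat.sqrt n; set B := p ^ (Nat.sqrt n).+1.
have [r sphere_large] := sqnorm_pigeonhole h L.
set D := behrend_set h L B r.
set P := #|{ffun 'I_n -> 'I_p}|; set Q := #|{ffun 'I_n -> 'I_q}|.
have P_def : P = p ^ n by rewrite /P card_ffun !card_ord.
have Q_def : Q = q ^ n by rewrite /Q card_ffun !card_ord.
pose eXY (i : {ffun 'I_n -> 'I_q}) (j : {ffun 'I_n -> 'I_p}) :=
  rs_edgeXY P D (enum_rank i) (enum_rank j).
pose eYZ (j : {ffun 'I_n -> 'I_p}) (k : {ffun 'I_n -> 'I_q}) :=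
  rs_edgeYZ P D (enum_rank j) (enum_rank k).
pose eZX (k i : {ffun 'I_n -> 'I_q}) := rs_edgeZX P D (enum_rank k) (enum_rank i).
exists (triangle_tensor F eXY eYZ eZX); split.
- exact: triangle_tensor_zeroing_out.
- have rank_inj (T : finType) : injective (fun x : T => nat_of_ord (enum_rank x)).
    by move=> x y /ord_inj/enum_rank_inj.
  apply/triangle_tensor_independent.
  apply: (edge_unique_comp (T := triangle (rs_edgeXY P D) (rs_edgeYZ P D) (rs_edgeZX P D)))
    (rank_inj _) (rank_inj _) (rank_inj _) _.
  exact/rs_triangle_edge_unique/behrend_set_ap3_free/digits_small_pow.
apply: (behrend_count_estimate p_gt0 p_le_q sphere_large); rewrite -P_def -Q_def.
apply: leq_trans (leq_mul (leqnn _) (card_behrend_set L (digits_small_pow _ p_gt0) r)) _.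
have MP : 3 * B ^ L <= P + 2 by rewrite P_def; apply: behrend_range_small.
apply: leq_trans (rs_triangle_card D (leq_divM Q P) MP) _.
apply: leq_trans (card_enum_rank_preimset _ _ _
  (triangle (rs_edgeXY P D) (rs_edgeYZ P D) (rs_edgeZX P D))) _.
exact: card_triangles_le_nnz.
Qed.

Local Open Scope ring_scope.

Lemma sublinear_natr (R : realType) (f : nat -> nat) (c : nat) :
  (forall K, exists N, forall n, (N <= n)%N -> (f n * K <= c * n)%N) ->
  forall e : R, 0 < e -> exists N, forall n, (N <= n)%N -> `|(f n)%:R| <= e * n%:R.
Proof.
move=> sub e e_gt0.
set K := (Num.truncn (c%:R / e)).+1.
have [N le_f] := sub K; exists N => n /le_f; rewrite normr_nat -(ler_nat R) !natrM => le_fK.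
have lt_cK : c%:R < e * K%:R.
  by rewrite mulrC -ltr_pdivrMr // truncnS_gt.
have K_gt0 : 0 < K%:R :> R by rewrite ltr0n.
have n_ge0 : 0 <= n%:R :> R by [].
nra.
Qed.

Lemma natr_powR_bounds (R : realType) (q p : nat) (eps : R) :
  (0 < q)%N -> 0 <= eps -> eps <= 1 -> p%:R = q%:R `^ eps -> (0 < p <= q)%N.
Proof.
move=> q_gt0 eps_ge0 eps_le1 p_def.
have q_ge1 : 1 <= q%:R :> R by rewrite ler1n.
apply/andP; split.
  by rewrite -(ltr_nat R) p_def (lt_le_trans ltr01) // -{1}(powRr0 q%:R) ler_powR.
by rewrite -(ler_nat R) p_def ler1_powR.
Qed.

Theorem mainTheorem3 (R : realType) (F : fieldType) (q : nat) (eps : R) (p : nat) :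
  (0 < q)%N -> 0 < eps -> eps <= 1 ->
  p%:R = q%:R `^ eps ->
  exists g : nat -> R,
    (forall e : R, 0 < e -> exists N : nat, forall n : nat, (N <= n)%N ->
        `|g n| <= e * n%:R) /\
    forall n : nat, (0 < n)%N ->
      exists A : tensor F {ffun 'I_n -> ('I_q * 'I_p)%type} {ffun 'I_n -> ('I_p * 'I_q)%type}
                          {ffun 'I_n -> ('I_q * 'I_q)%type},
        [/\ zeroing_out A (tpow F _ _ _ (mmt F q p q) n), independent A &
            q%:R `^ ((1 + eps) * n%:R - g n) <= (nnz A)%:R].
Proof.
move=> q_gt0 eps_gt0 eps_le1 p_def.
have /andP[p_gt0 p_le_q] := natr_powR_bounds q_gt0 (ltW eps_gt0) eps_le1 p_def.
exists (fun n => (behrend_loss n)%:R); split.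
  exact: sublinear_natr behrend_loss_sublinear.
move=> n _; have [A [zero_A indep_A card_A]] := mm_power_independent_zeroing_out F n p_gt0 p_le_q.
exists A; split=> //.
have q_neq0 : q%:R != 0 :> R by rewrite pnatr_eq0 -lt0n.
rewrite powRB ?q_neq0 ?implybT // mulrDl mul1r powRD ?q_neq0 ?implybT //.
rewrite powRrM -p_def !powR_mulrn // ler_pdivrMr ?exprn_gt0 ?ltr0n //.
by rewrite -!natrX -!natrM ler_nat -expnMn.
Qed.
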